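(* In the setting described in the context, let $g\in\mathcal{G}$ with $\int A\circ g\,d\mu<\infty$, and let $g_\star\nu=P_\sharp\big((g_\sharp\mu)_A\big)$ be the normalized measure associated with the invariant measure $g_\sharp\mu$. Then $$g_\star\nu=(P\circ g)_\sharp\,\mu_C,\qquad C=A\circ g.$$
   Context: Let $(\mathcal{X},\Sigma)$ be a measurable space, $\Phi^t$ a flow on $\mathcal{X}$ (bijective measurable maps, $\Phi^{t_1}\circ\Phi^{t_2}=\Phi^{t_1+t_2}$, jointly measurable), $f_\sharp$ push-forward, $\mu$ an invariant probability measure ($\Phi^t_\sharp\mu=\mu$ for all $t$). Let $h^a$, $a>0$, be bijective measurable maps and $\mathcal{G}$ a group of bijective measurable maps of $\mathcal{X}$ with $h^{a_1}\circ h^{a_2}=h^{a_1a_2}$, $\Phi^t\circ g=g\circ\Phi^t$, $g\circ h^a=h^a\circ g$, $\Phi^t\circ h^a=h^a\circ\Phi^{t/a}$ for all $a,a_1,a_2>0$, $t$, $g\in\mathcal{G}$. $\mathcal{Y}\subset\mathcal{X}$ is a representative set: for every $x$ there is a unique $a=A(x)>0$ with $h^a(x)\in\mathcal{Y}$, $A$ measurable with $\int A\,d\mu<\infty$; $P(x)=h^{A(x)}(x)$. For a measure $\rho$ and positive measurable $B$ with $0<\int B\,d\rho<\infty$, $\rho_B$ is the probability measure with $d\rho_B/d\rho=B/\int B\,d\rho$. $\nu=P_\sharp\mu_A$. *)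

From HB Require Import structures.
From mathcomp Require Import all_boot all_order all_algebra.
From mathcomp Require Import all_classical all_reals all_analysis.
Set Implicit Arguments. Unset Strict Implicit. Unset Printing Implicit Defensive.
Import Order.TTheory GRing.Theory Num.Theory.
Local Open Scope classical_set_scope.
Local Open Scope ring_scope.
Local Open Scope ereal_scope.

Definition normalized d (T : measurableType d) (R : realType)
  (rho : set T -> \bar R) (B : T -> R) : set T -> \bar R :=
  fun S => (\int[rho]_(x in S) (B x)%:E) * ((fine (\int[rho]_x (B x)%:E))^-1)%:E.

From HB Require Import structures.
From mathcomp Require Import all_boot all_order all_algebra.
From mathcomp Require Import all_classical all_reals all_analysis.
From mathcomp Require Import measurable_realfun lebesgue_integral.
Import Order.TTheory GRing.Theory Num.Theory.
Local Open Scope classical_set_scope.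
Local Open Scope ring_scope.

(* Change of variables in both the numerator and the normalizing integral
   gives (f_# rho)_B = f_# (rho_(B o f)) for measurable f and B >= 0; apply it
   with f = g and B = A, then push forward by P. *)

Section normalized_pushforward.
Context d1 d2 (T1 : measurableType d1) (T2 : measurableType d2) (R : realType).
Variables (rho : {measure set T1 -> \bar R}) (f : T1 -> T2).
Hypothesis mf : measurable_fun setT f.
Variable B : T2 -> R.
Hypotheses (mB : measurable_fun setT B) (B_ge0 : forall y, 0 <= B y).

Let mEB : measurable_fun setT (fun y => (B y)%:E).
Proof. exact/measurable_EFinP. Qed.

Let EB_ge0 : {in setT, forall y, (0 <= (B y)%:E)%E}.
Proof. by move=> y _; rewrite lee_fin. Qed.

Lemma integral_pushforward_density :
  (\int[pushforward rho f]_y (B y)%:E = \int[rho]_x ((B \o f) x)%:E)%E.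
Proof. exact: (ge0_integral_pushforward _ _ measurableT mEB EB_ge0). Qed.

Lemma normalized_pushforward E : measurable E ->
  normalized (pushforward rho f) B E = pushforward (normalized rho (B \o f)) f E.
Proof.
move=> mE; rewrite /normalized integral_pushforward_density.
rewrite ge0_integral_pushforward //; first exact: measurable_funTS.
by move=> y _; rewrite lee_fin.
Qed.

End normalized_pushforward.

Theorem proposition4 (R : realType) (d : measure_display) (X : measurableType d)
  (Phi : R -> X -> X) (h : R -> X -> X) (G : set (X -> X))
  (mu : probability X R) (Y : set X) (A : X -> R) (g : X -> X) :
  (* flow *)
  (forall t, bijective (Phi t) /\ measurable_fun setT (Phi t)) ->
  (forall t1 t2, Phi t1 \o Phi t2 = Phi (t1 + t2)) ->
  measurable_fun setT (fun p : R * X => Phi p.1 p.2) ->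
  (* invariance of mu *)
  (forall t, pushforward mu (Phi t) = mu) ->
  (* the maps h^a, a > 0 *)
  (forall a, 0 < a -> bijective (h a) /\ measurable_fun setT (h a)) ->
  (forall a1 a2, 0 < a1 -> 0 < a2 -> h a1 \o h a2 = h (a1 * a2)) ->
  (* the group G of bijective measurable maps *)
  G idfun ->
  (forall g1 g2, G g1 -> G g2 -> G (g1 \o g2)) ->
  (forall g1, G g1 -> bijective g1 /\ measurable_fun setT g1 /\
     exists g2, G g2 /\ cancel g1 g2 /\ cancel g2 g1) ->
  (* commutation relations *)
  (forall t g1, G g1 -> Phi t \o g1 = g1 \o Phi t) ->
  (forall a g1, 0 < a -> G g1 -> g1 \o h a = h a \o g1) ->
  (forall t a, 0 < a -> Phi t \o h a = h a \o Phi (t / a)) ->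
  (* representative set Y and the function A *)
  (forall x, 0 < A x /\ Y (h (A x) x) /\
     (forall a, 0 < a -> Y (h a x) -> a = A x)) ->
  measurable_fun setT A ->
  (* P(x) = h^{A(x)}(x) is measurable (needed for the push-forward P_# ) *)
  measurable_fun setT (fun x => h (A x) x) ->
  (\int[mu]_x (A x)%:E < +oo)%E ->
  (* the element g *)
  G g ->
  (\int[mu]_x ((A \o g) x)%:E < +oo)%E ->
  let P := fun x => h (A x) x in
  forall S, measurable S ->
    pushforward (normalized (pushforward mu g) A) P S =
    pushforward (normalized mu (A \o g)) (P \o g) S.
Proof.
move=> _ _ _ _ _ _ _ _ HG _ _ _ HA mA mP _ Gg _ P S mS.
have [_ [mg _]] := HG g Gg.
have mPS : measurable (P @^-1` S) by rewrite -(setTI (_ @^-1` _)); exact: mP.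
rewrite [LHS]/pushforward normalized_pushforward //.
by move=> x; apply: ltW; case: (HA x).
Qed.
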